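(* Assume the thresholds satisfy $\mathcal H^{(n)}_{t_n,s}(\mathbb P_{\widehat\eta_n,(t_n,s)})\ne a_n$ for all $n\ge0$ and all $t_n\le s\le t_{n+1}$. Then for any $\delta\in(0,1)$, $m\ge0$ and $N\ge1$, $$\bigcap_{0\le n\le m}\{t_n^N=t_n\}\supset\Omega_m^N(\delta,(a_n)_{0\le n\le m}).$$
   Context: Let $(E_n)_{n\ge0}$ be measurable spaces, $E'_n:=E_0\times\cdots\times E_n$, $\eta_0\in\mathcal P(E_0)$, $M_n$ Markov kernels from $E_{n-1}$ to $E_n$, $G_n:E_n\to(0,1)$ measurable, $W_{p,q}(x_{p+1:q}):=\prod_{p<k\le q}G_k(x_k)$, and $\mathbb P_{\eta,(p,s)}(dx_{0:s}):=\eta(dx_{0:p})M_{p+1}(x_p,dx_{p+1})\cdots M_s(x_{s-1},dx_s)$ for $\eta\in\mathcal P(E'_p)$. Criteria $\mathcal H^{(n)}_{p,q}:\mathcal P(E'_q)\to\mathbb R_+$ ($n\ge0$, $p\le q$) and thresholds $a_n\in\mathbb R$. Deterministic times and flow: $t_0=0$, $\widehat\eta_0=\eta_0$; $t_{n+1}:=\inf\{s>t_n:\mathcal H^{(n)}_{t_n,s}(\mathbb P_{\widehat\eta_n,(t_n,s)})\ge a_n\}$ (assumed finite), $\eta_{n+1}:=\mathbb P_{\widehat\eta_n,(t_n,t_{n+1})}$, $\widehat\eta_{n+1}(dx)\propto W_{t_n,t_{n+1}}(x_{t_n+1:t_{n+1}})\eta_{n+1}(dx)$. Selection kernel: for $g$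 with values in $(0,1]$ and a probability $\mu$, $\mathcal S_{g,\mu}(x,dy):=g(x)\delta_x(dy)+(1-g(x))g(y)\mu(dy)/\mu(g)$. Reference particle algorithm: $\widehat{\mathcal X}_0^{(N,i)}=\mathcal X_0^{(N,i)}$ i.i.d. $\eta_0$; given $\widehat{\mathcal X}_n^{(N,i)}\in E'_{t_n}$, each path is extended independently by the chain with kernels $M_{t_n+1},M_{t_n+2},\dots$ from its terminal coordinate, giving $X^{(N,i)}_{t_n+1:s}$; $\mathcal X_{n+1}^{(N,i)}=(\widehat{\mathcal X}_n^{(N,i)},X^{(N,i)}_{t_n+1:t_{n+1}})$, and the $\widehat{\mathcal X}_{n+1}^{(N,i)}$ are drawn conditionally independently from $\mathcal S_{g,\mu}(\mathcal X_{n+1}^{(N,i)},\cdot)$ with $g=W_{t_n,t_{n+1}}$ and $\mu=\frac1N\sum_j\delta_{\mathcal X^{(N,j)}_{n+1}}$. Write $\mathbb P^N_{\widehat\eta_n^N,(t_n,s)}:=\frac1N\sum_i\delta_{(\widehat{\mathcal X}_n^{(N,i)},X^{(N,i)}_{t_n+1:s})}$. Adaptive particle algorithm: the same, except with random times $t_0^N=0$ and $t_{n+1}^N:=\inf\{s>t_n^N:\mathcal H^{(n)}_{t_n^N,s}(\overline{\mathbb P}^N_{n,s})\ge a_n\}$, where $\overline{\mathbb P}^N_{n,s}:=\frac1N\sum_i\delta_{(\widehat{\mathcal Y}_n^{(N,i)},Y^{(N,i)}_{t_n^N+1:s})}$ is built from its own selected paths $\widehat{\mathcal Y}_n^{(N,i)}\in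 E'_{t_n^N}$ and their step-by-step extensions $Y^{(N,i)}_{t_n^N+1:s}$; selection uses $g=W_{t_n^N,t_{n+1}^N}$. The two algorithms are coupled so that, for each $m$, on $\bigcap_{0\le n\le m}\{t_n^N=t_n\}$ they coincide at all stages $n\le m$ and their path extensions after time $t_m$ coincide up to time $t_{m+1}\wedge t_{m+1}^N$. Event: for $\delta\in(0,1)$, $\Omega_m^N(\delta,(a_n)_{0\le n\le m}):=\{\forall0\le n\le m,\ \forall t_n\le s\le t_{n+1}:\ |\mathcal H^{(n)}_{t_n,s}(\mathbb P^N_{\widehat\eta_n^N,(t_n,s)})-\mathcal H^{(n)}_{t_n,s}(\mathbb P_{\widehat\eta_n,(t_n,s)})|\le\delta\,|\mathcal H^{(n)}_{t_n,s}(\mathbb P_{\widehat\eta_n,(t_n,s)})-a_n|\}$. *)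

From Stdlib Require Export Reals Lra Lia.
Open Scope R_scope.

(* [first_hit P t0 t1]: t1 = inf { s > t0 : P s } (a minimum, since times are
   natural numbers), i.e. t1 > t0, P t1, and no s with t0 < s < t1 satisfies P. *)
Definition first_hit (P : nat -> Prop) (t0 t1 : nat) : Prop :=
  (t0 < t1)%nat /\ P t1 /\ (forall s, (t0 < s < t1)%nat -> ~ P s).

(* Extended-valued version: [None] encodes the value +infinity (inf of the
   empty set). *)
Definition first_hit_opt (P : nat -> Prop) (t0 : nat) (r : option nat) : Prop :=
  match r with
  | Some t1 => first_hit P t0 t1
  | None => forall s, (t0 < s)%nat -> ~ P s
  end.

Definition le_min_opt (s t : nat) (r : option nat) : Prop :=
  (s <= t)%nat /\ match r with Some q => (s <= q)%nat | None => True end.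


(* The theorem then follows by course-of-values induction up to m
   ([bounded_prefix_induction]): if t^N_k = t_k for k <= n < m, the coupling
   identifies the adaptive empirical criterion with the reference one up to
   t_{n+1} /\ t^N_{n+1}; on Omega_m^N it lies on the same side of a_n as the
   exact criterion, so both searches stop at the same time. *)

Lemma threshold_side_stable (x y a delta : R) :
  0 < delta < 1 -> x <> a ->
  Rabs (y - x) <= delta * Rabs (x - a) -> (x >= a <-> y >= a).
Proof.
  intros Hdelta Hxa Hclose.
  pose proof (Rle_abs (y - x)) as Hyx.
  pose proof (Rle_abs (x - y)) as Hxy.
  rewrite Rabs_minus_sym in Hxy.
  destruct (Rtotal_order x a) as [Hlt | [Heq | Hgt]].
  - rewrite (Rabs_left (x - a)) in Hclose by lra.
    split; intros; nra.
  - contradiction.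
  - rewrite (Rabs_pos_eq (x - a)) in Hclose by lra.
    split; intros; nra.
Qed.

Lemma first_hit_opt_agree (P Q : nat -> Prop) (t0 t1 : nat) (r : option nat) :
  first_hit P t0 t1 -> first_hit_opt Q t0 r ->
  (forall s, (t0 < s)%nat -> le_min_opt s t1 r -> (P s <-> Q s)) ->
  r = Some t1.
Proof.
  intros [Hlt [HPt1 HPbefore]] HQ Hagree.
  destruct r as [q |].
  - destruct HQ as [Hq [HQq HQbefore]].
    destruct (Nat.lt_total q t1) as [Hqt | [-> | Htq]].
    + exfalso. apply (HPbefore q); [lia |].
      apply (Hagree q Hq); [split; lia | exact HQq].
    + reflexivity.
    + exfalso. apply (HQbefore t1); [lia |].
      apply (Hagree t1 Hlt); [split; lia | exact HPt1].
  - exfalso. apply (HQ t1 Hlt).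
    apply (Hagree t1 Hlt); [split; [lia | exact I] | exact HPt1].
Qed.

Lemma bounded_prefix_induction (P : nat -> Prop) (m : nat) :
  P 0%nat ->
  (forall n, (n < m)%nat -> (forall k, (k <= n)%nat -> P k) -> P (S n)) ->
  forall n, (n <= m)%nat -> P n.
Proof.
  intros H0 Hstep.
  assert (Hprefix : forall n, (n <= m)%nat -> forall k, (k <= n)%nat -> P k).
  { induction n as [| n IH]; intros Hn k Hk.
    - replace k with 0%nat by lia. exact H0.
    - destruct (Nat.eq_dec k (S n)) as [-> | Hne].
      + apply Hstep; [lia | apply IH; lia].
      + apply IH; lia. }
  intros n Hn. exact (Hprefix n Hn n (le_n n)).
Qed.

Theorem proposition5p2
  (* M q : the space P(E'_q) of probability measures on path space E'_q *)
  (M : nat -> Type)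
  (* criteria H^{(n)}_{p,q} : P(E'_q) -> R_+ *)
  (H : forall (n p q : nat), M q -> R)
  (H_nonneg : forall n p q (mu : M q), 0 <= H n p q mu)
  (a : nat -> R)
  (* deterministic times t_n and reference laws Pref n s = P_{hat eta_n,(t_n,s)} *)
  (t : nat -> nat)
  (Pref : forall (n s : nat), M s)
  (t0 : t 0%nat = 0%nat)
  (t_def : forall n, first_hit (fun s => H n (t n) s (Pref n s) >= a n)
                               (t n) (t (S n)))
  (* sample space; particle approximations indexed by N *)
  (Omega : Type)
  (* reference algorithm: PN N w n s = P^N_{hat eta^N_n,(t_n,s)} *)
  (PN : forall (N : nat) (w : Omega) (n s : nat), M s)
  (* adaptive algorithm: Pbar N w n s = bar P^N_{n,s}; random times tN (None = +oo) *)
  (Pbar : forall (N : nat) (w : Omega) (n s : nat), M s)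
  (tN : nat -> Omega -> nat -> option nat)
  (tN0 : forall N w, tN N w 0%nat = Some 0%nat)
  (tN_def : forall N w n,
      match tN N w n with
      | Some p => first_hit_opt (fun s => H n p s (Pbar N w n s) >= a n)
                                p (tN N w (S n))
      | None => tN N w (S n) = None
      end)
  (* coupling: on the event {t^N_k = t_k, k <= m}, the adaptive empirical
     measures coincide with the reference ones up to time t_{m+1} /\ t^N_{m+1} *)
  (coupling : forall N w m,
      (forall k, (k <= m)%nat -> tN N w k = Some (t k)) ->
      forall s, le_min_opt s (t (S m)) (tN N w (S m)) ->
        Pbar N w m s = PN N w m s)
  (* threshold assumption *)
  (Hneq : forall n s, (t n <= s <= t (S n))%nat ->
      H n (t n) s (Pref n s) <> a n) :
  forall (delta : R) (m N : nat), 0 < delta < 1 -> (1 <= N)%nat ->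
  forall w : Omega,
    (* w in Omega_m^N(delta, (a_n)_{n <= m}) *)
    (forall n, (n <= m)%nat -> forall s, (t n <= s <= t (S n))%nat ->
       Rabs (H n (t n) s (PN N w n s) - H n (t n) s (Pref n s))
         <= delta * Rabs (H n (t n) s (Pref n s) - a n)) ->
    forall n, (n <= m)%nat -> tN N w n = Some (t n).
Proof.
  intros delta m N Hdelta _ w Hclose.
  apply bounded_prefix_induction.
  - rewrite tN0, t0. reflexivity.
  - intros n Hn Hprefix.
    pose proof (tN_def N w n) as Hsearch.
    rewrite (Hprefix n (le_n n)) in Hsearch.
    apply (first_hit_opt_agree _ _ _ _ _ (t_def n) Hsearch).
    intros s Hs Hmin.
    (* up to t_{n+1} /\ t^N_{n+1}, the adaptive criterion is the reference
       empirical one, which lies on the same side of a_n as the exact one *)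
    rewrite (coupling N w n Hprefix s Hmin).
    destruct Hmin as [Hst _].
    apply threshold_side_stable with (delta := delta); [exact Hdelta | | ].
    + apply Hneq. lia.
    + apply Hclose; lia.
Qed.
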